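(* Let $X$ be a linearly ordered set (of arbitrary cardinality) and let $k,n\geq 3$ be odd natural numbers. Then $\mathrm{med}_k\in\langle\{\mathrm{med}_n\}\rangle$. Equivalently, every clone on $X$ contains either no median function or all median functions $\mathrm{med}_m$, $m\ge 3$ odd.
   Context: For a set $X$, $\mathscr O^{(n)}$ denotes the set of all $n$-ary functions $X^n\to X$ and $\mathscr O=\bigcup_{n\ge1}\mathscr O^{(n)}$. A clone on $X$ is a subset of $\mathscr O$ containing all projections and closed under composition. For $\mathscr F\subseteq\mathscr O$, $\langle\mathscr F\rangle$ is the smallest clone containing $\mathscr F$. Let $X$ be linearly ordered by $<$. For $n\ge1$ and $1\le k\le n$, $m^n_k(x_1,\dots,x_n)=x_{j_k}$ where $x_{j_1}\le\dots\le x_{j_n}$ (i.e. $m^n_k$ returns the $k$-th smallest entry). For odd $n$, the $n$-th median function is $\mathrm{med}_n=m^n_{(n+1)/2}$. *)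

From mathcomp Require Import all_boot all_order.
Set Implicit Arguments. Unset Strict Implicit. Unset Printing Implicit Defensive.
Import Order.TTheory.
Local Open Scope order_scope.

Definition op (X : Type) (n : nat) := ('I_n -> X) -> X.

Definition opset (X : Type) := forall n : nat, op X n -> Prop.

Definition proj (X : Type) (n : nat) (i : 'I_n) : op X n := fun x => x i.

Definition comp (X : Type) (m n : nat) (f : op X m) (g : 'I_m -> op X n)
  : op X n := fun x => f (fun i => g i x).

Definition is_clone (X : Type) (C : opset X) : Prop :=
  [/\ forall f : op X 0, ~ C 0 f,
      forall n (i : 'I_n), C n (proj i) &
      forall m n (f : op X m) (g : 'I_m -> op X n),
        C m f -> (forall i, C n (g i)) -> C n (comp f g)].

Definition gen_clone (X : Type) (F : opset X) : opset X :=
  fun n f => forall C : opset X, is_clone C ->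
    (forall m g, F m g -> C m g) -> C n f.

(* m^{n+1}_k : the k-th smallest entry (1 <= k <= n+1) of an (n+1)-tuple. *)
Definition kth_smallest d (X : orderType d) (n k : nat) (x : 'I_n.+1 -> X) : X :=
  nth (x ord0) (sort <=%O (codom x)) k.-1.

(* med_{2j+1} = m^{2j+1}_{j+1}. *)
Definition med d (X : orderType d) (j : nat) : op X j.*2.+1 :=
  @kth_smallest d X j.*2 j.+1.

Definition single_op (X : Type) (n : nat) (f : op X n) : opset X :=
  fun m g => exists e : m = n, eq_rect m (op X) g n e = f.

From Pilot Require Import Defs.
From mathcomp Require Import all_boot all_order.
From mathcomp Require Import zify.
From Stdlib Require Import FunctionalExtensionality.
Set Implicit Arguments. Unset Strict Implicit. Unset Printing Implicit Defensive.
Import Order.TTheory.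
Local Open Scope order_scope.

(* On a chain, an operation [f] with [(t <= f x) = B (t <= x_i)_i] for some
   Boolean function [B] is determined by [B]; for [med_j], [B] is strict
   majority.
   Identifying variables of [med_b] (b copies of x, b copies of y, one of z)
   gives the majority of three [med_1].  Majority of three and projections
   produce every weighted strict majority [maj_w] of odd total weight, by
   induction on the total weight and then on the number of odd weights: if
   [w = u + e_p + e_q] with [w_p], [w_q] odd, then
   [maj_w = maj3 (maj_(u + 2 e_p), maj_(u + 2 e_q), maj_u)]; if [p] is the only
   index of odd weight, then [w = 2 h + e_p] and
   [maj_w = maj_(h + [sum h even] e_p)].  Finally [med_a] is the weighted
   majority with unit weights. *)

Section MedianClones.
Variables (d : Order.disp_t) (X : orderType d).

Lemma count_ge_sorted (t : X) s : sorted <=%O s ->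
  count (>= t) s = (size s - find (>= t) s)%N.
Proof.
elim: s => //= x s IHs xs; case: ifP => [le_tx | _]; last first.
  by rewrite add0n IHs ?(path_sorted xs).
have : all (>= t) s.
  by apply: sub_all (order_path_min le_trans xs) => y; apply: le_trans.
by rewrite all_count => /eqP ->; rewrite subn0.
Qed.

Lemma nth_ge_sorted (t : X) x0 s k : sorted <=%O s -> (k < size s)%N ->
  (t <= nth x0 s k) = (find (>= t) s <= k)%N.
Proof.
move=> sorted_s lt_ks; have [le_fk | lt_kf] := leqP (find (>= t) s) k.
  have has_t : has (>= t) s by rewrite has_find (leq_ltn_trans le_fk).
  apply: le_trans (nth_find x0 has_t) _.
  by apply: (sorted_leq_nth le_trans lexx x0 sorted_s) le_fk;
    rewrite inE -?has_find.
exact: before_find.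
Qed.

Definition extends n (B : ('I_n -> bool) -> bool) (f : op X n) :=
  forall x t, (t <= f x) = B (fun i => t <= x i).

Lemma extends_inj n (B : ('I_n -> bool) -> bool) (f g : op X n) :
  extends B f -> extends B g -> f = g.
Proof.
move=> fB gB; apply: functional_extensionality => x.
by apply/le_anti; rewrite fB -gB lexx gB -fB lexx.
Qed.

Lemma extends_eq n (B B' : ('I_n -> bool) -> bool) (f : op X n) :
  extends B f -> B =1 B' -> extends B' f.
Proof. by move=> fB eqB x t; rewrite fB eqB. Qed.

Lemma med_extends j : extends (fun a => j < \sum_i a i)%N (@med d X j).
Proof.
move=> x t; set s := sort <=%O (codom x).
have size_s : size s = j.*2.+1 by rewrite size_sort size_codom card_ord.
have count_s : count (>= t) s = \sum_i ((t <= x i)%O : nat).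
  rewrite count_sort codomE count_map -sum1_count big_mkcond big_enum /=.
  by apply: eq_bigr => i _; case: (t <= x i).
rewrite /med /kth_smallest nth_ge_sorted ?sort_le_sorted ?size_s //=; last lia.
rewrite -/s -count_s count_ge_sorted ?sort_le_sorted // size_s.
have := find_size (>= t) s; rewrite size_s; set m := find _ s; lia.
Qed.

Definition wmaj n (w : 'I_n -> nat) (a : 'I_n -> bool) : bool :=
  (\sum_i w i < (\sum_i w i * a i).*2)%N.

Lemma eq_wmaj n (w w' : 'I_n -> nat) : w =1 w' -> wmaj w =1 wmaj w'.
Proof.
move=> eq_w a; rewrite /wmaj (eq_bigr w' (fun i _ => eq_w i)).
by under [\sum_i w i * a i]eq_bigr do rewrite eq_w.
Qed.

Lemma med_extends_wmaj j :
  extends (wmaj (fun _ : 'I_j.*2.+1 => 1%N)) (@med d X j).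
Proof.
apply: extends_eq (@med_extends j) _ => a.
rewrite /wmaj sum1_card card_ord.
under [X in (_ < X.*2)%N]eq_bigr do rewrite mul1n.
lia.
Qed.

Definition addw n (w : 'I_n -> nat) (p : 'I_n) (k : nat) : 'I_n -> nat :=
  fun i => (w i + k * (i == p))%N.

Lemma sum_delta n (p : 'I_n) (c : 'I_n -> nat) :
  (\sum_i (i == p) * c i = c p)%N.
Proof.
rewrite (bigD1 p) //= eqxx mul1n big1 ?addn0 // => i /negbTE ->.
exact: mul0n.
Qed.

Lemma sum_addw n (w : 'I_n -> nat) p k (c : 'I_n -> nat) :
  (\sum_i addw w p k i * c i = \sum_i w i * c i + k * c p)%N.
Proof.
rewrite -sum_delta big_distrr -big_split /=.
by apply: eq_bigr => i _; rewrite /addw mulnDl mulnA.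
Qed.

Lemma sum_addw_total n (w : 'I_n -> nat) p k :
  (\sum_i addw w p k i = \sum_i w i + k)%N.
Proof.
have := sum_addw w p k (fun _ => 1%N); rewrite muln1.
by under eq_bigr do rewrite muln1; under [X in _ = X + _]eq_bigr do rewrite muln1.
Qed.

Lemma wmaj_addw_pair n (u : 'I_n -> nat) p q a :
  wmaj (addw (addw u p 1) q 1) a
  = (1 < wmaj (addw u p 2) a + wmaj (addw u q 2) a + wmaj u a)%N.
Proof.
rewrite /wmaj !sum_addw !sum_addw_total.
by case: (a p); case: (a q) => /=; lia.
Qed.

Lemma wmaj_halve n (h : 'I_n -> nat) p a :
  wmaj (addw (fun i => h i * 2) p 1) a
  = wmaj (addw h p (~~ odd (\sum_i h i))) a.
Proof.
rewrite /wmaj !sum_addw !sum_addw_total -big_distrl /=.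
under [\sum_i h i * 2 * a i]eq_bigr do rewrite mulnAC; rewrite -big_distrl /=.
have := odd_double_half (\sum_i h i).
by case: (odd _); case: (a p) => /=; lia.
Qed.

Lemma wmaj_unit_weight n (h : 'I_n -> nat) p a :
  \sum_i h i = 0%N -> wmaj (addw h p 1) a = a p.
Proof.
move=> sum_h0; rewrite /wmaj sum_addw sum_addw_total sum_h0.
have : (\sum_i h i * a i <= \sum_i h i)%N.
  by apply: leq_sum => i _; case: (a i); rewrite ?muln1 ?muln0.
by rewrite sum_h0 leqn0 => /eqP ->; case: (a p).
Qed.

Lemma odd_sum_odd_term n (w : 'I_n -> nat) :
  odd (\sum_i w i) -> exists i, odd (w i).
Proof.
move=> odd_w; apply/existsP; apply: contraLR odd_w => /existsPn even_w.
by elim/big_ind: _ => // m k /negbTE odd_m /negbTE odd_k; rewrite oddD odd_m odd_k.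
Qed.

Lemma odd_pair_split n (w : 'I_n -> nat) p q :
  p != q -> odd (w p) -> odd (w q) ->
  exists2 u, w =1 addw (addw u p 1) q 1
           & (#|[set i | odd (u i)]| < #|[set i | odd (w i)]|)%N.
Proof.
move=> neq_pq odd_p odd_q.
have wp_gt0 : (0 < w p)%N by case: (w p) odd_p.
have wq_gt0 : (0 < w q)%N by case: (w q) odd_q.
pose u i := (w i - (i == p) - (i == q))%N.
have even_p : ~~ odd (u p) by rewrite /u eqxx (negbTE neq_pq) /= subn0 oddB ?odd_p.
have even_q : ~~ odd (u q).
  by rewrite /u eqxx eq_sym (negbTE neq_pq) /= subn0 oddB ?odd_q.
have w_u : w =1 addw (addw u p 1) q 1.
  move=> i; rewrite /addw /u; case: (eqVneq i p) => [->|_].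
    by rewrite (negbTE neq_pq) /=; lia.
  by case: (eqVneq i q) => [->|_] /=; lia.
exists u => //; apply/proper_card/properP; split; last first.
  by exists p; rewrite !inE ?odd_p.
apply/subsetP => i; rewrite !inE w_u /addw => odd_i.
case: (eqVneq i p) => [eq_ip|_]; first by rewrite -eq_ip odd_i in even_p.
case: (eqVneq i q) => [eq_iq|_]; first by rewrite -eq_iq odd_i in even_q.
by rewrite !muln0 !addn0.
Qed.

Lemma single_odd_split n (w : 'I_n -> nat) p :
  (forall i, i != p -> ~~ odd (w i)) -> odd (w p) ->
  exists h, w =1 addw (fun i => h i * 2) p 1.
Proof.
move=> even_w odd_p; exists (fun i => (w i)./2) => i.
rewrite /addw -[LHS]odd_double_half -muln2 addnC.
by case: (eqVneq i p) => [->|/even_w/negbTE->]; rewrite ?odd_p.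
Qed.

Lemma odd_addw2 n (u : 'I_n -> nat) p i : odd (addw u p 2 i) = odd (u i).
Proof. by rewrite /addw oddD oddM addbF. Qed.

Definition block b i : nat :=
  if (i < b)%N then 0 else if (i < b.*2)%N then 1 else 2.

Lemma sum_block b (c : nat -> nat) :
  (\sum_(i < b.*2.+1) c (block b i) = b * c 0 + b * c 1 + c 2)%N.
Proof.
have le_b_2b : (b <= b.*2)%N by rewrite -addnn leq_addr.
rewrite -(big_mkord xpredT (fun i => c (block b i))) big_nat_recr //=.
rewrite (big_cat_nat (leq0n b) le_b_2b) /=.
have -> : \sum_(0 <= i < b) c (block b i) = \sum_(0 <= i < b) c 0.
  by apply: eq_big_nat => i /andP [_ lt_ib]; rewrite /block lt_ib.
have -> : \sum_(b <= i < b.*2) c (block b i) = \sum_(b <= i < b.*2) c 1.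
  by apply: eq_big_nat => i /andP [le_bi lt_i2b]; rewrite /block ltnNge le_bi lt_i2b.
rewrite !sum_nat_const_nat /block ltnNge le_b_2b ltnn /=.
by congr (_ * _ + _ * _ + _); lia.
Qed.

Section Clone.
Variable C : opset X.
Arguments C : clear implicits.
Hypothesis C_clone : is_clone C.

Definition realizable n (B : ('I_n -> bool) -> bool) :=
  exists2 f, C n f & extends B f.

Lemma realizable_eq n (B B' : ('I_n -> bool) -> bool) :
  realizable B -> B =1 B' -> realizable B'.
Proof. by move=> [f Cf fB] eqB; exists f => //; apply: extends_eq eqB. Qed.

Lemma realizable_proj n (i : 'I_n) : realizable (fun a => a i).
Proof. by case: C_clone => _ C_proj _; exists (proj i). Qed.

Lemma med3_of_med b : (0 < b)%N -> C b.*2.+1 (@med d X b) -> C 3 (@med d X 1).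
Proof.
case: C_clone => _ C_proj C_comp b_gt0 C_medb.
pose sel i : 'I_3 := inord (block b i).
suff -> : @med d X 1 = Defs.comp (@med d X b) (fun i => proj (sel i)) by apply: C_comp.
apply: extends_inj (@med_extends 1) _ => x t.
rewrite /Defs.comp /proj med_extends.
have := sum_block b (fun j => (t <= x (inord j))%O : nat); rewrite /= => ->.
rewrite (eq_bigr (fun j : 'I_3 => (t <= x (inord j))%O : nat)); last first.
  by move=> j _; rewrite inord_val.
rewrite !big_ord_recl big_ord0 /=.
by case: (t <= x _); case: (t <= x _); case: (t <= x _) => /=; lia.
Qed.

Hypothesis C_med3 : C 3 (@med d X 1).

Lemma realizable_maj3 n (B0 B1 B2 : ('I_n -> bool) -> bool) :
  realizable B0 -> realizable B1 -> realizable B2 ->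
  realizable (fun a => 1 < B0 a + B1 a + B2 a)%N.
Proof.
case: C_clone => _ _ C_comp [f0 Cf0 f0B] [f1 Cf1 f1B] [f2 Cf2 f2B].
exists (Defs.comp (@med d X 1) (fun i => nth f0 [:: f0; f1; f2] i)).
  by apply: C_comp => // -[[|[|[|//]]] ?].
move=> x t; rewrite /Defs.comp med_extends !big_ord_recl big_ord0 /=.
by rewrite f0B f1B f2B addn0 addnA.
Qed.

Lemma wmaj_realizable n (w : 'I_n -> nat) :
  odd (\sum_i w i) -> realizable (wmaj w).
Proof.
have [N] := ubnP (\sum_i w i); elim: N w => // N IHN w.
have [K] := ubnP #|[set i | odd (w i)]|; elim: K w => // K IHK w.
rewrite !ltnS => le_odd le_sum odd_sum.
have [[p q] /and3P [/= neq_pq odd_p odd_q] | single_odd] :=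
  pickP (fun pq : 'I_n * 'I_n => [&& pq.1 != pq.2, odd (w pq.1) & odd (w pq.2)]).
  have [u w_u lt_odd] := odd_pair_split neq_pq odd_p odd_q.
  have sum_w : \sum_i w i = (\sum_i u i + 2)%N.
    by rewrite (eq_bigr _ (fun i _ => w_u i)) !sum_addw_total -addnA.
  have odd_u : odd (\sum_i u i) by move: odd_sum; rewrite sum_w oddD addbF.
  have IHu2 r : realizable (wmaj (addw u r 2)).
    have odd_u2 : [set i | odd (addw u r 2 i)] = [set i | odd (u i)].
      by apply/setP => i; rewrite !inE odd_addw2.
    apply: IHK.
    - by rewrite odd_u2; apply: leq_trans lt_odd le_odd.
    - by rewrite sum_addw_total -sum_w ltnS.
    - by rewrite sum_addw_total -sum_w.
  apply: realizable_eq (realizable_maj3 (IHu2 p) (IHu2 q) (IHN u _ odd_u)) _.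
    by rewrite sum_w in le_sum; lia.
  by move=> a; rewrite (eq_wmaj w_u) wmaj_addw_pair.
have [p odd_p] := odd_sum_odd_term odd_sum.
have even_w i : i != p -> ~~ odd (w i).
  move=> neq_ip; apply: contraNN (negbT (single_odd (i, p))) => odd_i.
  by rewrite /= neq_ip odd_i.
have [h w_h] := single_odd_split even_w odd_p.
pose v := addw h p (~~ odd (\sum_i h i)).
have wmaj_v : wmaj w =1 wmaj v by move=> a; rewrite (eq_wmaj w_h) wmaj_halve.
have [h0 | h_gt0] := posnP (\sum_i h i).
  apply: realizable_eq (realizable_proj p) _ => a.
  by rewrite wmaj_v /v h0 wmaj_unit_weight.
apply: realizable_eq (IHN v _ _) (fun a => esym (wmaj_v a)).
- have : \sum_i w i = ((\sum_i h i).*2 + 1)%N.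
    by rewrite (eq_bigr _ (fun i _ => w_h i)) sum_addw_total -big_distrl /= muln2.
  by rewrite /v sum_addw_total; case: (odd _); lia.
- by rewrite /v sum_addw_total oddD oddb addbN addbb.
Qed.

End Clone.
End MedianClones.

Theorem mainTheorem1 (d : Order.disp_t) (X : orderType d) (a b : nat) :
  (1 <= a)%N -> (1 <= b)%N ->
  gen_clone (single_op (@med d X b)) (@med d X a).
Proof.
move=> _ b_gt0 C C_clone C_gen.
have C_med3 : C 3 (@med d X 1).
  by apply: med3_of_med b_gt0 _ => //; apply: C_gen; exists erefl.
have odd_ones : odd (\sum_(i < a.*2.+1) 1).
  by rewrite sum1_card card_ord /= odd_double.
have [f Cf f_ext] := wmaj_realizable C_clone C_med3 odd_ones.
by rewrite (extends_inj (@med_extends_wmaj _ _ a) f_ext).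
Qed.
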